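(* Let $N>1$ be an integer, let $0<\epsilon<e$, let $\tfrac12<\beta<1$, and let $k$ be an integer with $\beta^kN>1$. Set $K=\lceil \log(e/\epsilon)/\log(\beta/(1-\beta))\rceil$. Then there exist functions $c_1,\dots,c_K:[0,N]\to\mathbb{R}$ and $r_1,\dots,r_K:[\beta^kN,\beta^{k-1}N]\to\mathbb{R}$ such that $g_k(x,y)=\sum_{i=1}^K c_i(x)r_i(y)$ satisfies \[ \left|\Lambda\!\left(\tfrac{x+y}{2}\right)-g_k(x,y)\right|\le\epsilon\qquad\text{for all }(x,y)\in[0,N]\times[\beta^kN,\beta^{k-1}N], \] where $\Lambda(z)=\Gamma(z+1/2)/\Gamma(z+1)$.
   Context: $\Gamma$ denotes the gamma function; $e$ is Euler's number; $\log$ is the natural logarithm. A function of the form $\sum_{i=1}^K c_i(x)r_i(y)$ is said to have rank at most $K$. *)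

From Stdlib Require Import Reals Lra Lia ZArith List ClassicalEpsilon.
Open Scope R_scope.

Definition gauss_seq (z : R) (n : nat) : R :=
  INR (fact n) * Rpower (INR n) z / prod_f_R0 (fun k => z + INR k) n.

(* Euler's Gamma function via the Gauss limit formula
   Gamma z = lim_{n->oo} n! n^z / (z (z+1) ... (z+n)), valid for z > 0
   (indeed for all z not a non-positive integer). *)
Definition Gamma (z : R) : R :=
  epsilon (inhabits 0) (fun l => Un_cv (gauss_seq z) l).

Definition Lambda (z : R) : R := Gamma (z + / 2) / Gamma (z + 1).

Definition Rceil (x : R) : Z := (- Int_part (- x))%Z.

Definition sum1K (K : nat) (f : nat -> R) : R :=
  fold_right Rplus 0 (map f (seq 1 K)).

(* Lambda(s) is the limit of the Gauss quotients
     P_n(s) = n^(-1/2) prod_(k <= n) (s + 1 + k) / (s + 1/2 + k).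
   For fixed x >= 0, u |-> P_n((x + u)/2) is a product of functions 1 + 1/(u + a)
   with a > 0, hence completely monotone on [0, oo): its divided differences
   alternate in sign.  For such an f, Newton interpolation at nodes z_1, ..., z_K
   leaves the remainder prod (t - z_i) * f[z_1, ..., z_K, t], and the sign pattern
   gives |f[z_1, ..., z_K, t]| * prod z_i <= f(0).  With t and the nodes in
   [Y, Y + h] the error is at most f(0) (h/Y)^K <= e ((1 - beta)/beta)^K <= eps,
   because f(0) <= P_n(0) <= e.  Letting n -> oo transfers the bound to Lambda, and
   Newton's form sum_i f[z_1, ..., z_(i-1), z_i] prod_(j < i) (y - z_j) has rank K
   in (x, y). *)

From Stdlib Require Import Reals Lra Lia ZArith List ClassicalEpsilon.
Open Scope R_scope.

(** * Divided differences and complete monotonicity *)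

Definition slope (z : R) (f : R -> R) (u : R) : R := (f u - f z) / (u - z).

(* [divdiff [z1; ...; zn] f t] is the divided difference f[z1, ..., zn, t]. *)
Fixpoint divdiff (l : list R) (f : R -> R) : R -> R :=
  match l with nil => f | z :: l' => divdiff l' (slope z f) end.

Lemma divdiff_ext_in l f g t :
  (forall u, In u (t :: l) -> f u = g u) -> divdiff l f t = divdiff l g t.
Proof.
  revert f g; induction l as [|z l IH]; intros f g Hfg; simpl.
  - apply Hfg; simpl; auto.
  - apply IH; intros u Hu; unfold slope.
    rewrite (Hfg u), (Hfg z); simpl in *; tauto.
Qed.

Lemma divdiff_lin l f g a b t :
  divdiff l (fun u => a * f u + b * g u) t = a * divdiff l f t + b * divdiff l g t.
Proof.
  revert f g; induction l as [|z l IH]; intros f g; simpl; auto.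
  rewrite <- IH; apply divdiff_ext_in; intros u _; unfold slope, Rdiv; ring.
Qed.

Lemma divdiff_scale l f c t : divdiff l (fun u => c * f u) t = c * divdiff l f t.
Proof.
  rewrite (divdiff_ext_in l _ (fun u => c * f u + 0 * f u)), divdiff_lin by (intros; ring).
  ring.
Qed.

Lemma divdiff_const l c t : l <> nil -> divdiff l (fun _ => c) t = 0.
Proof.
  destruct l as [|z l]; [congruence|]; intros _; simpl.
  rewrite (divdiff_ext_in l _ (fun u => 0 * c)), divdiff_scale by (intros; unfold slope, Rdiv; ring).
  ring.
Qed.

Lemma divdiff_opp l f t : divdiff l (fun u => - f u) t = - divdiff l f t.
Proof.
  rewrite (divdiff_ext_in l _ (fun u => -1 * f u)), divdiff_scale by (intros; ring).
  ring.
Qed.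

Lemma alt_divdiff_cons z l f t :
  (-1) ^ length (z :: l) * divdiff (z :: l) f t =
  (-1) ^ length l * divdiff l (fun u => - slope z f u) t.
Proof. rewrite divdiff_opp; simpl; ring. Qed.

Lemma nodes_cons_inv (D : R -> Prop) z l t :
  NoDup (t :: z :: l) -> Forall D (z :: l) ->
  t <> z /\ D z /\ NoDup (t :: l) /\ Forall (fun u => D u /\ u <> z) l.
Proof.
  intros Hnd HD; inversion Hnd as [|? ? Ht Hzl]; inversion Hzl as [|? ? Hz Hl];
    inversion HD as [|? ? HDz HDl]; subst.
  repeat split; auto.
  - intros ->; apply Ht; simpl; auto.
  - constructor; auto; intros Hin; apply Ht; simpl; auto.
  - rewrite Forall_forall in *; intros u Hu; split; auto; intros ->; auto.
Qed.

Definition completely_monotone (D : R -> Prop) (f : R -> R) : Prop :=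
  forall l t, NoDup (t :: l) -> D t -> Forall D l ->
    0 <= (-1) ^ length l * divdiff l f t.

Lemma cm_ext D f g :
  completely_monotone D f -> (forall u, D u -> f u = g u) -> completely_monotone D g.
Proof.
  intros Hf Hfg l t Hnd Ht Hl; rewrite <- (divdiff_ext_in l f g); auto.
  intros u [<-|Hu]; auto; apply Hfg; rewrite Forall_forall in Hl; auto.
Qed.

Lemma cm_subset (D D' : R -> Prop) f :
  (forall u, D' u -> D u) -> completely_monotone D f -> completely_monotone D' f.
Proof.
  intros HD Hf l t Hnd Ht Hl; apply Hf; auto.
  rewrite Forall_forall in *; auto.
Qed.

Lemma cm_nonneg D f u : completely_monotone D f -> D u -> 0 <= f u.
Proof.
  intros Hf Hu; assert (Hnd : NoDup (u :: nil)) by (repeat constructor; simpl; tauto).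
  generalize (Hf nil u Hnd Hu (Forall_nil D)); simpl; lra.
Qed.

Lemma cm_const D c : 0 <= c -> completely_monotone D (fun _ => c).
Proof.
  intros Hc [|z l] t _ _ _.
  - simpl; lra.
  - rewrite (divdiff_const (z :: l) c t) by discriminate; lra.
Qed.

Lemma cm_lin D f g a b :
  0 <= a -> 0 <= b -> completely_monotone D f -> completely_monotone D g ->
  completely_monotone D (fun u => a * f u + b * g u).
Proof.
  intros Ha Hb Hf Hg l t Hnd Ht Hl; rewrite divdiff_lin.
  specialize (Hf l t Hnd Ht Hl); specialize (Hg l t Hnd Ht Hl).
  replace ((-1) ^ length l * (a * divdiff l f t + b * divdiff l g t)) with
    (a * ((-1) ^ length l * divdiff l f t) + b * ((-1) ^ length l * divdiff l g t)) by ring.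
  apply Rplus_le_le_0_compat; apply Rmult_le_pos; auto.
Qed.

Lemma cm_neg_slope D f z :
  completely_monotone D f -> D z ->
  completely_monotone (fun u => D u /\ u <> z) (fun u => - slope z f u).
Proof.
  intros Hf Hz l t Hnd [Ht Htz] Hl; rewrite <- alt_divdiff_cons; apply Hf; auto.
  - constructor.
    + intros [->|Hin]; [tauto|]; inversion Hnd; auto.
    + constructor; [|inversion Hnd; auto].
      intros Hin; rewrite Forall_forall in Hl; apply (Hl z Hin); auto.
  - constructor; auto; rewrite Forall_forall in *; intros u Hu; apply Hl; auto.
Qed.

Lemma cm_mult D f g :
  completely_monotone D f -> completely_monotone D g ->
  completely_monotone D (fun u => f u * g u).
Proof.
  intros Hf Hg l; revert D f g Hf Hg.
  induction l as [|z l IH]; intros D f g Hf Hg t Hnd Ht Hl.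
  - simpl; rewrite Rmult_1_l; apply Rmult_le_pos; eapply cm_nonneg; eauto.
  - destruct (nodes_cons_inv D z l t Hnd Hl) as (Htz & Hz & Hnd' & Hl').
    rewrite alt_divdiff_cons.
    (* Leibniz rule for slopes *)
    rewrite (divdiff_ext_in l _ (fun u => 1 * (- slope z f u * g u) + f z * - slope z g u))
      by (intros u _; unfold slope, Rdiv; ring).
    rewrite divdiff_lin.
    set (n := length l); set (A := divdiff l (fun u => - slope z f u * g u) t);
      set (B := divdiff l (fun u => - slope z g u) t).
    replace ((-1) ^ n * (1 * A + f z * B)) with ((-1) ^ n * A + f z * ((-1) ^ n * B)) by ring.
    apply Rplus_le_le_0_compat.
    + apply (IH (fun u => D u /\ u <> z)); auto.
      * apply cm_neg_slope; auto.
      * apply (cm_subset D); [intros u []|]; auto.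
    + apply Rmult_le_pos; [eapply cm_nonneg; eauto|].
      apply (cm_neg_slope D g z); auto.
Qed.

Lemma cm_prod D (f : nat -> R -> R) n :
  (forall k, completely_monotone D (f k)) ->
  completely_monotone D (fun u => prod_f_R0 (fun k => f k u) n).
Proof.
  intros Hf; induction n as [|n IH]; simpl; auto.
  apply (cm_mult D (fun u => prod_f_R0 (fun k => f k u) n)); auto.
Qed.

Lemma cm_inv_shift (D : R -> Prop) a :
  (forall u, D u -> - a < u) -> completely_monotone D (fun u => / (u + a)).
Proof.
  intros Ha l; revert D Ha; induction l as [|z l IH]; intros D Ha t Hnd Ht Hl.
  - simpl; specialize (Ha t Ht); rewrite Rmult_1_l; left; apply Rinv_0_lt_compat; lra.
  - destruct (nodes_cons_inv D z l t Hnd Hl) as (Htz & Hz & Hnd' & Hl').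
    assert (Hin : forall u, In u (t :: l) -> D u /\ u <> z)
      by (intros u [<-|Hu]; [|rewrite Forall_forall in Hl']; auto).
    rewrite alt_divdiff_cons.
    (* the slope of 1/(u + a) at z is -1/((z + a)(u + a)) *)
    rewrite (divdiff_ext_in l _ (fun u => / (z + a) * / (u + a))), divdiff_scale.
    + replace ((-1) ^ length l * (/ (z + a) * divdiff l (fun u => / (u + a)) t)) with
        (/ (z + a) * ((-1) ^ length l * divdiff l (fun u => / (u + a)) t)) by ring.
      apply Rmult_le_pos.
      * left; apply Rinv_0_lt_compat; specialize (Ha z Hz); lra.
      * apply (IH (fun u => D u /\ u <> z)); auto; intros u [Hu _]; auto.
    + intros u Hu; destruct (Hin u Hu) as [HDu Huz].
      generalize (Ha u HDu) (Ha z Hz); intros.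
      unfold slope; field; repeat split; lra.
Qed.

Fixpoint node_poly (l : list R) (t : R) : R :=
  match l with nil => 1 | z :: l' => (t - z) * node_poly l' t end.

Lemma cm_divdiff_node_poly_le D f w l t :
  completely_monotone D f -> D w -> D t -> Forall D l -> NoDup (t :: l) ->
  w < t -> Forall (fun z => w < z) l ->
  divdiff l f t * node_poly l w <= f w.
Proof.
  revert D f t; induction l as [|z l IH]; intros D f t Hf Hw Ht Hl Hnd Hwt Hwl; simpl.
  - assert (Hnd' : NoDup (t :: w :: nil))
      by (repeat constructor; simpl; intuition lra).
    generalize (Hf (w :: nil) t Hnd' Ht (Forall_cons _ Hw (Forall_nil D))); simpl.
    assert (Hq : f t - f w = slope w f t * (t - w)) by (unfold slope; field; lra).
    nra.
  - destruct (nodes_cons_inv D z l t Hnd Hl) as (Htz & Hz & Hnd' & Hl').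
    inversion Hwl as [|? ? Hwz Hwl']; subst.
    assert (IH' := IH (fun u => D u /\ u <> z) (fun u => - slope z f u) t
      (cm_neg_slope D f z Hf Hz) (conj Hw (Rlt_not_eq _ _ Hwz)) (conj Ht Htz) Hl' Hnd' Hwt Hwl').
    rewrite divdiff_opp in IH'.
    assert (Hfz := cm_nonneg D f z Hf Hz).
    assert (Hq : f w - f z = slope z f w * (w - z)) by (unfold slope; field; lra).
    assert (H := Rmult_le_compat_r (z - w) _ _ (ltac:(lra)) IH').
    nra.
Qed.

Lemma alt_node_poly_nonneg l w :
  Forall (fun z => w <= z) l -> 0 <= (-1) ^ length l * node_poly l w.
Proof.
  induction l as [|z l IH]; intros Hl; simpl; [lra|].
  inversion Hl; subst.
  replace (-1 * (-1) ^ length l * ((w - z) * node_poly l w)) with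
    ((z - w) * ((-1) ^ length l * node_poly l w)) by ring.
  apply Rmult_le_pos; auto; lra.
Qed.

Lemma node_poly_abs_le l t h :
  Forall (fun z => Rabs (t - z) <= h) l -> Rabs (node_poly l t) <= h ^ length l.
Proof.
  induction l as [|z l IH]; intros Hl; simpl; [rewrite Rabs_R1; lra|].
  inversion Hl; subst; rewrite Rabs_mult.
  apply Rmult_le_compat; auto; apply Rabs_pos.
Qed.

Lemma node_poly_abs_ge l t Y :
  0 <= Y -> Forall (fun z => Y <= Rabs (t - z)) l -> Y ^ length l <= Rabs (node_poly l t).
Proof.
  intros HY; induction l as [|z l IH]; intros Hl; simpl; [rewrite Rabs_R1; lra|].
  inversion Hl; subst; rewrite Rabs_mult.
  apply Rmult_le_compat; auto; apply pow_le; auto.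
Qed.

Lemma node_poly_root l t : In t l -> node_poly l t = 0.
Proof.
  induction l as [|z l IH]; simpl; [tauto|].
  intros [->|Hin]; [ring|rewrite IH; auto; ring].
Qed.

Lemma cm_abs_divdiff_node_poly_le D f w l t :
  completely_monotone D f -> D w -> D t -> Forall D l -> NoDup (t :: l) ->
  w < t -> Forall (fun z => w < z) l ->
  Rabs (divdiff l f t) * Rabs (node_poly l w) <= f w.
Proof.
  intros Hf Hw Ht Hl Hnd Hwt Hwl.
  assert (Hd := Hf l t Hnd Ht Hl).
  assert (Hp : 0 <= (-1) ^ length l * node_poly l w).
  { apply alt_node_poly_nonneg; eapply Forall_impl; [|exact Hwl]; simpl; intros; lra. }
  assert (Hsq : (-1) ^ length l * (-1) ^ length l = 1).
  { rewrite <- Rpow_mult_distr; replace (-1 * -1) with 1 by ring; apply pow1. }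
  rewrite <- Rabs_mult, Rabs_right.
  - apply (cm_divdiff_node_poly_le D); auto.
  - replace (divdiff l f t * node_poly l w) with
      ((-1) ^ length l * divdiff l f t * ((-1) ^ length l * node_poly l w))
      by (transitivity (((-1) ^ length l * (-1) ^ length l) * (divdiff l f t * node_poly l w));
          [ring | rewrite Hsq; ring]).
    apply Rle_ge, Rmult_le_pos; auto.
Qed.

(** * Newton interpolation *)

Fixpoint newton (l : list R) (f : R -> R) (t : R) : R :=
  match l with nil => 0 | z :: l' => f z + (t - z) * newton l' (slope z f) t end.

Lemma newton_remainder l f t : f t = newton l f t + node_poly l t * divdiff l f t.
Proof.
  revert f; induction l as [|z l IH]; intros f; simpl; [ring|].
  transitivity (f z + (t - z) * (newton l (slope z f) t + node_poly l t * divdiff l (slope z f) t));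
    [rewrite <- IH | ring].
  destruct (Req_dec t z) as [->|Htz]; [ring|].
  unfold slope; field; lra.
Qed.

Lemma newton_rank_sum l f t :
  newton l f t = fold_right Rplus 0
    (map (fun i => divdiff (firstn i l) f (nth i l 0) * node_poly (firstn i l) t)
       (seq 0 (length l))).
Proof.
  revert f; induction l as [|z l IH]; intros f; simpl; auto.
  rewrite <- seq_shift, map_map, IH; simpl.
  rewrite Rmult_1_r; f_equal; clear IH.
  induction (seq 0 (length l)) as [|i s IHs]; simpl; [ring|].
  rewrite Rmult_plus_distr_l, IHs; ring.
Qed.

Lemma newton_sum1K l f t :
  newton l f t = sum1K (length l)
    (fun i => divdiff (firstn (i - 1) l) f (nth (i - 1) l 0) * node_poly (firstn (i - 1) l) t).
Proof.
  rewrite newton_rank_sum; unfold sum1K; rewrite <- seq_shift, map_map.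
  f_equal; apply map_ext; intros i; simpl; rewrite Nat.sub_0_r; reflexivity.
Qed.

Lemma cm_interpolation_error D f w l t Y h :
  completely_monotone D f -> D w -> D t -> Forall D l -> NoDup l ->
  0 < Y -> 0 <= h -> Y <= t - w ->
  Forall (fun z => Y <= z - w /\ Rabs (t - z) <= h) l ->
  Rabs (f t - newton l f t) <= f w * (h / Y) ^ length l.
Proof.
  intros Hf Hw Ht Hl Hnd HY Hh HYt Hz.
  assert (Hfw := cm_nonneg D f w Hf Hw).
  rewrite (newton_remainder l f t) at 1.
  replace (newton l f t + node_poly l t * divdiff l f t - newton l f t) with
    (node_poly l t * divdiff l f t) by ring.
  rewrite Rabs_mult.
  destruct (in_dec Req_EM_T t l) as [Hin|Hnin].
  - rewrite node_poly_root, Rabs_R0, Rmult_0_l by auto.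
    apply Rmult_le_pos; auto; apply pow_le, Rle_mult_inv_pos; lra.
  - assert (Hup : Rabs (node_poly l t) <= h ^ length l).
    { apply node_poly_abs_le; eapply Forall_impl; [|exact Hz]; simpl; tauto. }
    assert (Hlow : Y ^ length l <= Rabs (node_poly l w)).
    { apply node_poly_abs_ge; [lra|]; eapply Forall_impl; [|exact Hz]; simpl.
      intros z [Hzw _]; rewrite Rabs_minus_sym, Rabs_right; lra. }
    assert (Hcm : Rabs (divdiff l f t) * Rabs (node_poly l w) <= f w).
    { apply (cm_abs_divdiff_node_poly_le D); auto.
      - constructor; auto.
      - lra.
      - eapply Forall_impl; [|exact Hz]; simpl; intros; lra. }
    assert (HYn : 0 < Y ^ length l) by (apply pow_lt; auto).
    assert (HA : Rabs (divdiff l f t) <= f w * / Y ^ length l).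
    { apply (Rmult_le_reg_r (Y ^ length l)); auto.
      rewrite Rmult_assoc, Rinv_l by lra.
      assert (Hd := Rabs_pos (divdiff l f t)); nra. }
    unfold Rdiv; rewrite Rpow_mult_distr, pow_inv.
    assert (Hd := Rabs_pos (divdiff l f t)); assert (Hn := Rabs_pos (node_poly l t)).
    apply Rle_trans with (h ^ length l * Rabs (divdiff l f t)).
    + apply Rmult_le_compat_r; auto.
    + replace (f w * (h ^ length l * / Y ^ length l)) with
        (h ^ length l * (f w * / Y ^ length l)) by ring.
      apply Rmult_le_compat_l; auto; apply pow_le; auto.
Qed.

Lemma Un_cv_const c : Un_cv (fun _ => c) c.
Proof. intros e He; exists 0%nat; intros; unfold Rdist; rewrite Rminus_diag, Rabs_R0; auto. Qed.

Lemma Rabs_le_of_cv u l B N : Un_cv u l ->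
  (forall n, (N <= n)%nat -> Rabs (u n) <= B) -> Rabs l <= B.
Proof.
  intros Hu HB.
  apply (Rle_cv_lim (Un := fun n => Rabs (u (n + N)%nat)) (Vn := fun _ => B)).
  - intros n; apply HB; lia.
  - apply cv_cvabs, CV_shift', Hu.
  - apply Un_cv_const.
Qed.

Lemma newton_cv l fn f t :
  (forall u, In u l -> Un_cv (fun n => fn n u) (f u)) ->
  Un_cv (fun n => newton l (fn n) t) (newton l f t).
Proof.
  revert fn f; induction l as [|z l IH]; intros fn f Hcv; simpl; [apply Un_cv_const|].
  apply CV_plus; [apply Hcv; simpl; auto|].
  apply CV_mult; [apply Un_cv_const|].
  apply IH; intros u Hu; unfold slope, Rdiv.
  apply CV_mult; [apply CV_minus; apply Hcv; simpl; auto | apply Un_cv_const].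
Qed.

(** * The Gauss product for Gamma *)

Lemma exp_le_exp x y : x <= y -> exp x <= exp y.
Proof. intros [Hxy|Hxy]; [left; apply exp_increasing; auto | subst; lra]. Qed.

Lemma ln_le_sub_1 y : 0 < y -> ln y <= y - 1.
Proof. intros Hy; generalize (exp_ineq1_le (ln y)); rewrite exp_ln; lra. Qed.

Lemma ln_succ_bounds m : (1 <= m)%nat ->
  / INR (S m) <= ln (INR (S m)) - ln (INR m) <= / INR m.
Proof.
  intros Hm; assert (Hm0 : 0 < INR m) by (apply lt_0_INR; lia).
  rewrite S_INR.
  assert (Hquot : forall a b, 0 < a -> 0 < b -> ln a - ln b = ln (a / b)).
  { intros a b Ha Hb; unfold Rdiv; rewrite ln_mult, ln_Rinv;
      [ring | auto | auto | apply Rinv_0_lt_compat; auto]. }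
  split.
  - generalize (ln_le_sub_1 (INR m / (INR m + 1)) ltac:(apply Rdiv_lt_0_compat; lra)).
    rewrite <- Hquot by lra.
    replace (INR m / (INR m + 1) - 1) with (- / (INR m + 1)) by (field; lra); lra.
  - generalize (ln_le_sub_1 ((INR m + 1) / INR m) ltac:(apply Rdiv_lt_0_compat; lra)).
    rewrite <- Hquot by lra.
    replace ((INR m + 1) / INR m - 1) with (/ INR m) by (field; lra); lra.
Qed.

Lemma prod_f_R0_pos f n : (forall k, 0 < f k) -> 0 < prod_f_R0 f n.
Proof. intros Hf; induction n; simpl; auto; apply Rmult_lt_0_compat; auto. Qed.

Lemma shifted_prod_pos z n : 0 < z -> 0 < prod_f_R0 (fun k => z + INR k) n.
Proof. intros Hz; apply prod_f_R0_pos; intros k; generalize (pos_INR k); lra. Qed.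

Lemma gauss_seq_pos z n : 0 < z -> 0 < gauss_seq z n.
Proof.
  intros Hz; unfold gauss_seq, Rpower; apply Rdiv_lt_0_compat.
  - apply Rmult_lt_0_compat; [apply INR_fact_lt_0 | apply exp_pos].
  - apply shifted_prod_pos; auto.
Qed.

Definition gauss_step (z : R) (m : nat) : R :=
  exp (z * (ln (INR (S m)) - ln (INR m))) * (INR (S m) / (z + INR (S m))).

Lemma gauss_seq_succ z m : 0 < z ->
  gauss_seq z (S m) = gauss_seq z m * gauss_step z m.
Proof.
  intros Hz; unfold gauss_seq, gauss_step, Rpower.
  rewrite fact_simpl, mult_INR.
  change (prod_f_R0 (fun k => z + INR k) (S m)) with
    (prod_f_R0 (fun k => z + INR k) m * (z + INR (S m))).
  replace (z * ln (INR (S m))) with (z * ln (INR m) + z * (ln (INR (S m)) - ln (INR m)))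
    by ring.
  rewrite exp_plus.
  assert (Hp := shifted_prod_pos z m Hz); assert (HS := pos_INR (S m)).
  assert (Hf := INR_fact_neq_0 m).
  field; repeat split; lra.
Qed.

Lemma gauss_step_ge_1 z m : 0 < z -> (1 <= m)%nat -> 1 <= gauss_step z m.
Proof.
  intros Hz Hm; unfold gauss_step; destruct (ln_succ_bounds m Hm) as [H1 _].
  assert (HS : 0 < INR (S m)) by (apply lt_0_INR; lia).
  assert (E1 : exp (z / INR (S m)) <= exp (z * (ln (INR (S m)) - ln (INR m))))
    by (apply exp_le_exp; unfold Rdiv; apply Rmult_le_compat_l; lra).
  assert (E2 := exp_ineq1_le (z / INR (S m))).
  replace (1 + z / INR (S m)) with ((z + INR (S m)) / INR (S m)) in E2 by (field; lra).
  assert (0 < INR (S m) / (z + INR (S m))) by (apply Rdiv_lt_0_compat; lra).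
  apply Rle_trans with ((z + INR (S m)) / INR (S m) * (INR (S m) / (z + INR (S m)))).
  - right; field; lra.
  - apply Rmult_le_compat_r; lra.
Qed.

(* with c = z (z + 1), the sequence [gauss_seq z m * exp (c / m)] is nonincreasing *)
Lemma gauss_step_le z m : 0 < z -> (1 <= m)%nat ->
  gauss_step z m <= exp (z * (z + 1) / INR m - z * (z + 1) / INR (S m)).
Proof.
  intros Hz Hm; unfold gauss_step; destruct (ln_succ_bounds m Hm) as [_ H2].
  assert (HS : 0 < INR (S m)) by (apply lt_0_INR; lia).
  assert (Hm0 : 0 < INR m) by (apply lt_0_INR; lia).
  assert (HSm := S_INR m).
  assert (E1 : exp (z * (ln (INR (S m)) - ln (INR m))) <= exp (z / INR m))
    by (apply exp_le_exp; unfold Rdiv; apply Rmult_le_compat_l; lra).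
  assert (E2 : INR (S m) / (z + INR (S m)) <= exp (- (z / (z + INR (S m))))).
  { assert (Hq : 0 < INR (S m) / (z + INR (S m))) by (apply Rdiv_lt_0_compat; lra).
    generalize (ln_le_sub_1 _ Hq).
    replace (INR (S m) / (z + INR (S m)) - 1) with (- (z / (z + INR (S m)))) by (field; lra).
    rewrite <- (exp_ln _ Hq) at 2; apply exp_le_exp. }
  apply Rle_trans with (exp (z / INR m) * exp (- (z / (z + INR (S m))))).
  - apply Rmult_le_compat; auto; [left; apply exp_pos | left; apply Rdiv_lt_0_compat; lra].
  - rewrite <- exp_plus; apply exp_le_exp.
    replace (z / INR m + - (z / (z + INR (S m)))) with
      (z * (z + 1) * / (INR m * (z + INR m + 1))) by (rewrite HSm; field; lra).
    replace (z * (z + 1) / INR m - z * (z + 1) / INR (S m)) with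
      (z * (z + 1) * / (INR m * (INR m + 1))) by (rewrite HSm; field; lra).
    apply Rmult_le_compat_l; [nra|].
    apply Rinv_le_contravar; nra.
Qed.

Lemma gauss_seq_bounded z n : 0 < z ->
  gauss_seq z (S n) <= gauss_seq z 1 * exp (z * (z + 1)).
Proof.
  intros Hz; set (c := z * (z + 1)).
  assert (Hc : 0 <= c) by (unfold c; nra).
  assert (Hmon : forall m, gauss_seq z (S m) * exp (c / INR (S m)) <= gauss_seq z 1 * exp c).
  { induction m as [|m IH].
    - simpl; replace (c / 1) with c by field; lra.
    - eapply Rle_trans; [|exact IH].
      rewrite gauss_seq_succ, Rmult_assoc by auto.
      apply Rmult_le_compat_l; [left; apply gauss_seq_pos; auto|].
      replace (exp (c / INR (S m))) with
        (exp (c / INR (S m) - c / INR (S (S m))) * exp (c / INR (S (S m))))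
        by (rewrite <- exp_plus; f_equal; ring).
      apply Rmult_le_compat_r; [left; apply exp_pos|].
      apply gauss_step_le; auto; lia. }
  assert (Hexp : 1 <= exp (c / INR (S n))).
  { generalize (exp_ineq1_le (c / INR (S n))).
    assert (0 <= c / INR (S n)) by (apply Rle_mult_inv_pos; auto; apply lt_0_INR; lia).
    lra. }
  generalize (Hmon n) (gauss_seq_pos z (S n) Hz); nra.
Qed.

Lemma gauss_seq_cv z : 0 < z -> exists l, 0 < l /\ Un_cv (gauss_seq z) l.
Proof.
  intros Hz; set (u := fun n => gauss_seq z (S n)).
  assert (Hgrow : Un_growing u).
  { intros n; unfold u; rewrite (gauss_seq_succ z (S n)) by auto.
    generalize (gauss_step_ge_1 z (S n) Hz ltac:(lia)) (gauss_seq_pos z (S n) Hz); nra. }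
  assert (Hub : has_ub u).
  { exists (gauss_seq z 1 * exp (z * (z + 1))); intros x [n ->]; apply gauss_seq_bounded; auto. }
  destruct (growing_cv u Hgrow Hub) as [l Hl].
  exists l; split.
  - generalize (growing_ineq u l Hgrow Hl 0) (gauss_seq_pos z 1 Hz); unfold u; lra.
  - apply CV_shift with 1%nat; eapply Un_cv_ext; [|exact Hl].
    intros n; unfold u; rewrite Nat.add_1_r; auto.
Qed.

Lemma Gamma_spec z : 0 < z -> 0 < Gamma z /\ Un_cv (gauss_seq z) (Gamma z).
Proof.
  intros Hz; destruct (gauss_seq_cv z Hz) as [l [Hl Hcv]].
  assert (H : Un_cv (gauss_seq z) (Gamma z)) by (unfold Gamma; apply epsilon_spec; eauto).
  rewrite (UL_sequence _ _ _ H Hcv); auto.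
Qed.

(** * Interpolating Lambda *)

Definition lambda_seq (n : nat) (s : R) : R :=
  Rpower (INR n) (- / 2) * prod_f_R0 (fun k => (s + 1 + INR k) / (s + / 2 + INR k)) n.

Lemma prod_f_R0_ext f g n : (forall k, f k = g k) -> prod_f_R0 f n = prod_f_R0 g n.
Proof. intros H; induction n; simpl; rewrite ?IHn, ?H; auto. Qed.

Lemma prod_f_R0_div f g n : (forall k, g k <> 0) ->
  prod_f_R0 (fun k => f k / g k) n = prod_f_R0 f n / prod_f_R0 g n.
Proof.
  intros Hg; induction n as [|n IH]; simpl; auto.
  assert (prod_f_R0 g n <> 0) by (clear IH; induction n; simpl; auto).
  rewrite IH; field; auto.
Qed.

Lemma gauss_seq_quotient s n : 0 < s ->
  gauss_seq (s + / 2) n / gauss_seq (s + 1) n = lambda_seq n s.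
Proof.
  intros Hs; unfold gauss_seq, lambda_seq.
  rewrite prod_f_R0_div by (intros k; generalize (pos_INR k); lra).
  replace (s + / 2) with ((s + 1) + - / 2) at 1 by field.
  rewrite Rpower_plus.
  assert (Hp := shifted_prod_pos (s + / 2) n ltac:(lra)).
  assert (Hq := shifted_prod_pos (s + 1) n ltac:(lra)).
  assert (0 < Rpower (INR n) (s + 1)) by apply exp_pos.
  assert (Hf := INR_fact_neq_0 n).
  field; repeat split; lra.
Qed.

Lemma lambda_seq_cv s : 0 < s -> Un_cv (fun n => lambda_seq n s) (Lambda s).
Proof.
  intros Hs.
  destruct (Gamma_spec (s + / 2)) as [_ Hnum]; [lra|].
  destruct (Gamma_spec (s + 1)) as [Hden_pos Hden]; [lra|].
  apply Un_cv_ext with (fun n => gauss_seq (s + / 2) n * / gauss_seq (s + 1) n).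
  { intros n; rewrite <- gauss_seq_quotient; auto. }
  apply CV_mult; auto.
  apply (continuity_seq Rinv); auto.
  apply (continuity_pt_inv id); [apply derivable_continuous_pt, derivable_pt_id|].
  unfold id; lra.
Qed.

Lemma lambda_seq_pos n s : 0 <= s -> 0 < lambda_seq n s.
Proof.
  intros Hs; apply Rmult_lt_0_compat; [apply exp_pos|].
  apply prod_f_R0_pos; intros k; generalize (pos_INR k); intros; apply Rdiv_lt_0_compat; lra.
Qed.

Lemma lambda_seq_antitone n s : 0 <= s -> lambda_seq n s <= lambda_seq n 0.
Proof.
  intros Hs; apply Rmult_le_compat_l; [left; apply exp_pos|].
  apply prod_SO_Rle; intros k _; assert (Hk := pos_INR k); split.
  - apply Rle_mult_inv_pos; lra.
  - replace ((s + 1 + INR k) / (s + / 2 + INR k)) with (1 + / 2 * / (s + / 2 + INR k))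
      by (field; lra).
    replace ((0 + 1 + INR k) / (0 + / 2 + INR k)) with (1 + / 2 * / (0 + / 2 + INR k))
      by (field; lra).
    apply Rplus_le_compat_l, Rmult_le_compat_l; [lra|].
    apply Rinv_le_contravar; lra.
Qed.

Lemma lambda_prod_sq_le n :
  (prod_f_R0 (fun k => (0 + 1 + INR k) / (0 + / 2 + INR k)) n) ^ 2 <= 4 * (INR n + 1).
Proof.
  induction n as [|n IH]; [simpl; lra|].
  change (prod_f_R0 (fun k => (0 + 1 + INR k) / (0 + / 2 + INR k)) (S n)) with
    (prod_f_R0 (fun k => (0 + 1 + INR k) / (0 + / 2 + INR k)) n *
     ((0 + 1 + INR (S n)) / (0 + / 2 + INR (S n)))).
  rewrite Rpow_mult_distr, S_INR.
  set (m := INR n); assert (Hm : 0 <= m) by apply pos_INR.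
  apply Rle_trans with (4 * (m + 1) * ((0 + 1 + (m + 1)) / (0 + / 2 + (m + 1))) ^ 2).
  { apply Rmult_le_compat_r; [apply pow2_ge_0 | auto]. }
  (* (m + 1)(m + 2) <= (m + 3/2)^2 *)
  replace (4 * (m + 1) * ((0 + 1 + (m + 1)) / (0 + / 2 + (m + 1))) ^ 2) with
    (4 * (m + 2) * ((m + 1) * (m + 2) / ((m + 3 / 2) * (m + 3 / 2)))) by (field; lra).
  replace (4 * (m + 1 + 1)) with (4 * (m + 2) * 1) by ring.
  apply Rmult_le_compat_l; [lra|].
  apply (Rmult_le_reg_r ((m + 3 / 2) * (m + 3 / 2))); [nra|].
  unfold Rdiv; rewrite Rmult_assoc, Rinv_l; nra.
Qed.

Lemma exp_1_sq_gt_5 : 5 < exp 1 * exp 1.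
Proof.
  assert (H := exp_ineq1_le (/ 2)).
  replace (exp 1) with (exp (/ 2) * exp (/ 2)) by (rewrite <- exp_plus; f_equal; field).
  set (a := exp (/ 2)) in *; assert (9 / 4 <= a * a) by nra; nra.
Qed.

Lemma lambda_seq_0_le_e n : (4 <= n)%nat -> lambda_seq n 0 <= exp 1.
Proof.
  intros Hn; assert (H4 : 4 <= INR n) by (apply (le_INR 4) in Hn; simpl in Hn; lra).
  assert (Hsq : Rpower (INR n) (- / 2) * Rpower (INR n) (- / 2) = / INR n).
  { rewrite <- Rpower_plus; replace (- / 2 + - / 2) with (Ropp 1) by field.
    rewrite Rpower_Ropp, Rpower_1; lra. }
  assert (H5 : lambda_seq n 0 * lambda_seq n 0 <= 5).
  { unfold lambda_seq.
    set (Q := prod_f_R0 (fun k => (0 + 1 + INR k) / (0 + / 2 + INR k)) n).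
    assert (HQ : Q ^ 2 <= 4 * (INR n + 1)) by apply lambda_prod_sq_le.
    replace (Rpower (INR n) (- / 2) * Q * (Rpower (INR n) (- / 2) * Q)) with
      (/ INR n * Q ^ 2) by (rewrite <- Hsq; ring).
    apply (Rmult_le_reg_l (INR n)); [lra|].
    rewrite <- Rmult_assoc, Rinv_r by lra; nra. }
  generalize exp_1_sq_gt_5 (lambda_seq_pos n 0 (Rle_refl 0)) (exp_pos 1); nra.
Qed.

Lemma cm_lambda_seq x n : 0 <= x ->
  completely_monotone (fun u => 0 <= u) (fun u => lambda_seq n ((x + u) / 2)).
Proof.
  intros Hx.
  apply cm_ext with (fun u => Rpower (INR n) (- / 2) *
    prod_f_R0 (fun k => 1 * 1 + 1 * / (u + (x + 1 + 2 * INR k))) n).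
  - apply (cm_mult _ (fun _ => Rpower (INR n) (- / 2))).
    + apply cm_const; left; apply exp_pos.
    + apply (cm_prod _ (fun k u => 1 * 1 + 1 * / (u + (x + 1 + 2 * INR k)))); intros k.
      apply cm_lin; try lra; [apply cm_const; lra|].
      apply cm_inv_shift; intros u Hu; generalize (pos_INR k); lra.
  - intros u Hu; unfold lambda_seq; f_equal.
    apply prod_f_R0_ext; intros k; generalize (pos_INR k); intros; field; lra.
Qed.

Lemma lambda_seq_interpolation_error x n l t Y h :
  0 <= x -> (4 <= n)%nat -> NoDup l -> 0 < Y -> 0 <= h -> Y <= t ->
  Forall (fun z => Y <= z /\ Rabs (t - z) <= h) l ->
  Rabs (lambda_seq n ((x + t) / 2) - newton l (fun u => lambda_seq n ((x + u) / 2)) t)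
    <= exp 1 * (h / Y) ^ length l.
Proof.
  intros Hx Hn Hnd HY Hh HYt Hl.
  eapply Rle_trans.
  - apply (cm_interpolation_error _ _ 0 l t Y h (cm_lambda_seq x n Hx)); auto; try lra.
    + eapply Forall_impl; [|exact Hl]; simpl; intros; lra.
    + eapply Forall_impl; [|exact Hl]; simpl; intros; rewrite Rminus_0_r; auto.
  - apply Rmult_le_compat_r; [apply pow_le, Rle_mult_inv_pos; lra|].
    replace ((x + 0) / 2) with (x / 2) by field.
    eapply Rle_trans; [apply lambda_seq_antitone; lra | apply lambda_seq_0_le_e; auto].
Qed.

Lemma Lambda_interpolation_error x l t Y h :
  0 <= x -> NoDup l -> 0 < Y -> 0 <= h -> Y <= t ->
  Forall (fun z => Y <= z /\ Rabs (t - z) <= h) l ->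
  Rabs (Lambda ((x + t) / 2) - newton l (fun u => Lambda ((x + u) / 2)) t)
    <= exp 1 * (h / Y) ^ length l.
Proof.
  intros Hx Hnd HY Hh HYt Hl.
  apply (Rabs_le_of_cv (fun n => lambda_seq n ((x + t) / 2)
                          - newton l (fun u => lambda_seq n ((x + u) / 2)) t) _ _ 4).
  - apply CV_minus; [apply lambda_seq_cv; lra|].
    apply newton_cv; intros u Hu; apply lambda_seq_cv.
    rewrite Forall_forall in Hl; destruct (Hl u Hu); lra.
  - intros n Hn; apply lambda_seq_interpolation_error; auto.
Qed.

Lemma Rceil_to_nat_ge x : x <= INR (Z.to_nat (Rceil x)).
Proof.
  destruct (base_Int_part (- x)) as [Hlow _].
  assert (Hx : x <= IZR (Rceil x)) by (unfold Rceil; rewrite opp_IZR; lra).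
  destruct (Z_le_gt_dec 0 (Rceil x)) as [Hpos|Hneg].
  - rewrite INR_IZR_INZ, Z2Nat.id; auto.
  - assert (IZR (Rceil x) < 0) by (apply IZR_lt; lia).
    generalize (pos_INR (Z.to_nat (Rceil x))); lra.
Qed.

Lemma geometric_ceil_bound M eps q : 0 < M -> 0 < eps -> 1 < q ->
  M * (/ q) ^ Z.to_nat (Rceil (ln (M / eps) / ln q)) <= eps.
Proof.
  intros HM Heps Hq; set (K := Z.to_nat (Rceil (ln (M / eps) / ln q))).
  assert (Hlnq : 0 < ln q) by (rewrite <- ln_1; apply ln_increasing; lra).
  assert (HK : ln (M / eps) <= INR K * ln q).
  { generalize (Rmult_le_compat_r (ln q) _ _ (ltac:(lra)) (Rceil_to_nat_ge (ln (M / eps) / ln q))).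
    fold K; replace (ln (M / eps) / ln q * ln q) with (ln (M / eps)) by (field; lra); auto. }
  assert (HqK : M / eps <= q ^ K).
  { rewrite <- (exp_ln (M / eps)) by (apply Rdiv_lt_0_compat; auto).
    rewrite <- Rpower_pow by lra; apply exp_le_exp; lra. }
  assert (Hpow : 0 < q ^ K) by (apply pow_lt; lra).
  rewrite pow_inv.
  apply (Rmult_le_reg_r (q ^ K)); auto.
  rewrite Rmult_assoc, Rinv_l by lra.
  apply (Rmult_le_reg_r (/ eps)); [apply Rinv_0_lt_compat; auto|].
  replace (eps * q ^ K * / eps) with (q ^ K) by (field; lra).
  unfold Rdiv in HqK; lra.
Qed.

Definition harmonic_nodes (Y h : R) (K : nat) : list R :=
  map (fun i => Y + h / (INR i + 1)) (seq 0 K).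

Lemma harmonic_nodes_length Y h K : length (harmonic_nodes Y h K) = K.
Proof. unfold harmonic_nodes; rewrite length_map, length_seq; auto. Qed.

Lemma harmonic_nodes_in Y h K z : 0 < h -> In z (harmonic_nodes Y h K) -> Y < z <= Y + h.
Proof.
  intros Hh Hz; apply in_map_iff in Hz; destruct Hz as [i [<- _]].
  assert (Hi := pos_INR i).
  assert (Hq : 0 < h / (INR i + 1)) by (apply Rdiv_lt_0_compat; lra).
  assert (h / (INR i + 1) <= h).
  { apply (Rmult_le_reg_r (INR i + 1)); [lra|].
    unfold Rdiv; rewrite Rmult_assoc, Rinv_l; nra. }
  lra.
Qed.

Lemma harmonic_nodes_NoDup Y h K : 0 < h -> NoDup (harmonic_nodes Y h K).
Proof.
  intros Hh; apply NoDup_map_NoDup_ForallPairs; [|apply seq_NoDup].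
  intros i j _ _ Hij; apply INR_eq.
  assert (E : / (INR i + 1) = / (INR j + 1)).
  { apply (Rmult_eq_reg_l h); [unfold Rdiv in Hij; lra | lra]. }
  apply Rinv_eq_reg in E; lra.
Qed.

Theorem lemma3p4 (N : nat) (eps beta : R) (k : Z) :
  (1 < N)%nat ->
  0 < eps -> eps < exp 1 ->
  / 2 < beta -> beta < 1 ->
  powerRZ beta k * INR N > 1 ->
  let K := Z.to_nat (Rceil (ln (exp 1 / eps) / ln (beta / (1 - beta)))) in
  exists (c r : nat -> R -> R),
    forall x y : R,
      0 <= x <= INR N ->
      powerRZ beta k * INR N <= y <= powerRZ beta (k - 1) * INR N ->
      Rabs (Lambda ((x + y) / 2) - sum1K K (fun i => c i x * r i y)) <= eps.
Proof.
  intros _ Heps _ Hb1 Hb2 HY K.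
  set (Y := powerRZ beta k * INR N) in *.
  set (h := (1 - beta) / beta * Y).
  assert (Hh : 0 < h) by (apply Rmult_lt_0_compat; [apply Rdiv_lt_0_compat|]; lra).
  assert (Htop : powerRZ beta (k - 1) * INR N = Y + h).
  { replace (k - 1)%Z with (k + -1)%Z by lia.
    rewrite powerRZ_add by lra; unfold h, Y; simpl; field; lra. }
  rewrite Htop.
  set (l := harmonic_nodes Y h K).
  exists (fun i x => divdiff (firstn (i - 1) l) (fun u => Lambda ((x + u) / 2)) (nth (i - 1) l 0)),
    (fun i y => node_poly (firstn (i - 1) l) y).
  intros x y Hx Hy.
  rewrite <- (harmonic_nodes_length Y h K), <- newton_sum1K.
  eapply Rle_trans.
  - apply (Lambda_interpolation_error x l y Y h); try lra; [apply harmonic_nodes_NoDup; auto|].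
    apply Forall_forall; intros z Hz; destruct (harmonic_nodes_in Y h K z Hh Hz).
    split; [lra | apply Rabs_le; lra].
  - replace (length l) with K by (symmetry; apply harmonic_nodes_length).
    replace (h / Y) with (/ (beta / (1 - beta))) by (unfold h; field; repeat split; lra).
    apply geometric_ceil_bound; [apply exp_pos | auto |].
    apply (Rmult_lt_reg_r (1 - beta)); [lra|].
    unfold Rdiv; rewrite Rmult_assoc, Rinv_l; lra.
Qed.
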